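(* Let $k$ be a finite field with $q$ elements. Let $f=p^d\in V_n$, where $p$ is an irreducible homogeneous polynomial and $d\ge1$, so that $R(f)$ is an indecomposable regular representation. Suppose that the map $V_{n-1}\to V_n/\langle f\rangle$ given by multiplication by $y$ is not bijective. Then the quiver $|R(f)|$ has exactly one loop, and this loop is at the vertex $0$. Moreover, after removing this loop, $|R(f)|$ is a directed tree with the following properties: 1. no arrow starts at $0$; 2. at every vertex other than $0$ exactly one arrow starts; 3. at every vertex other than $0$ either exactly $q$ arrows end or none end, and at $0$ exactly $q-1$ arrows end; 4. every vertex at which no arrow ends is connected to $0$ by a unique directed path, and this path has length $d$.
   Context: A quiver is a quadruple $(\Gamma_0,\Gamma_1,s,t)$ with vertex set $\Gamma_0$, arrow set $\Gamma_1$, and start and terminus maps $s,t$. For a linear Kronecker representation $f,g\colon X_1\to X_0$, the quiver $|X|$ has vertices $X_0$, arrows $X_1$, $s=f$ and $t=g$. $V_n\subset k[x,y]$ is the space of homogeneous polynomials of degree $n$, with $V_{-1}=0$. For $0\ne f\in V_n$, $R(f)$ is the representation $V_{n-1}\rightrightarrows V_n/\langle f\rangle$ whose first map is multiplication by $x$ and whose second map is multiplication by $y$, each followed by the projection. *)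

From HB Require Import structures.
From mathcomp Require Import all_boot all_order all_algebra all_field.
Set Implicit Arguments. Unset Strict Implicit. Unset Printing Implicit Defensive.
Import GRing.Theory.
Local Open Scope ring_scope.

Section Quiver.
Variables (V A : eqType) (s t : A -> V).

Definition joins (e : A) (a b : V) : bool :=
  ((s e == a) && (t e == b)) || ((s e == b) && (t e == a)).

Fixpoint uwalk (u w : V) (es : seq A) : bool :=
  match es with
  | [::] => u == w
  | e :: es' => ((s e == u) && uwalk (t e) w es') || ((t e == u) && uwalk (s e) w es')
  end.

Fixpoint dwalk (u w : V) (es : seq A) : bool :=
  match es with
  | [::] => u == w
  | e :: es' => (s e == u) && dwalk (t e) w es'
  end.

Definition dpath (u w : V) (es : seq A) : bool :=
  dwalk u w es && uniq (u :: map t es).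

Definition qconnected (VP : pred V) (AP : pred A) : Prop :=
  forall u w, VP u -> VP w -> exists es, all AP es && uwalk u w es.

(* underlying graph has no (undirected) cycle: a cyclic sequence of distinct
   vertices vs_0,...,vs_{m-1} (m >= 1) and distinct arrows es_i joining vs_i
   and vs_{i+1 mod m} *)
Definition qacyclic (AP : pred A) : Prop :=
  ~ exists (es : seq A) (vs : seq V),
      [/\ es != [::], size vs = size es, uniq es && uniq vs, all AP es
        & all (fun x => joins x.1 x.2.1 x.2.2) (zip es (zip vs (rot 1 vs)))].

Definition qtree (VP : pred V) (AP : pred A) : Prop :=
  qconnected VP AP /\ qacyclic AP.
End Quiver.

(** * Homogeneous polynomials in k[x,y].
    k[x,y] is modelled as {poly {poly k}}: the outer variable is y, the inner
    one is x.  V_m is modelled by coordinate vectors 'rV_(m.+1): the vector a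
    corresponds to sum_i a_i x^i y^(m-i).  In particular V_{n-1} = 'rV_n
    (and V_{-1} = 'rV_0 = 0). *)
Section Hom.
Variable k : fieldType.

Definition Xv : {poly {poly k}} := ('X)%:P.
Definition Yv : {poly {poly k}} := 'X.

Definition hpoly (m : nat) (a : 'rV[k]_m) : {poly {poly k}} :=
  \sum_(i < m) (a 0 i)%:P%:P * Xv ^+ i * Yv ^+ (m.-1 - i).

Definition hcoef (P : {poly {poly k}}) (i j : nat) : k := (P`_j)`_i.

Definition homog (m : nat) (P : {poly {poly k}}) : Prop :=
  forall i j, hcoef P i j != 0 -> (i + j)%N = m.

Definition hvec (n : nat) (P : {poly {poly k}}) : 'rV[k]_(n.+1) :=
  \row_(i < n.+1) hcoef P i (n - i).
End Hom.

Definition irreducible_elt (R : idomainType) (p : R) : Prop :=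
  [/\ p != 0, p \isn't a GRing.unit
    & forall a b, p = a * b -> a \is a GRing.unit \/ b \is a GRing.unit].

Section Rf.
Variables (k : finFieldType) (n : nat) (F : 'rV[k]_(n.+1)).

Definition coset (v : 'rV[k]_(n.+1)) : {set 'rV[k]_(n.+1)} :=
  [set v + c *: F | c : k].

Definition isVertex : pred {set 'rV[k]_(n.+1)} :=
  fun C => [exists v : 'rV[k]_(n.+1), C == coset v].

Definition Rsrc (a : 'rV[k]_n) : {set 'rV[k]_(n.+1)} := coset (hvec n (Xv k * hpoly a)).
Definition Rtgt (a : 'rV[k]_n) : {set 'rV[k]_(n.+1)} := coset (hvec n (Yv k * hpoly a)).
End Rf.

From HB Require Import structures.
From mathcomp Require Import all_boot all_order all_algebra all_field.
From mathcomp Require Import zify.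
Set Implicit Arguments. Unset Strict Implicit. Unset Printing Implicit Defensive.
Import GRing.Theory.
Local Open Scope ring_scope.

(* If multiplication by y is not bijective, the coefficient of x^n in f
   vanishes, so y divides the irreducible p: p = c y and f = c^d y^d, whence
   n = d.  A coset of <y^n> in V_n is then determined by its coefficients of
   x^1, ..., x^n, which identifies V_n/<f> with V_{n-1}: multiplication by x
   becomes the identity and multiplication by y the nilpotent shift
   S(a_0, ..., a_{n-1}) = (a_1, ..., a_{n-1}, 0).  So |R(f)| is the graph of
   S.  Its only loop is at 0, the position of the last nonzero coordinate
   strictly drops along every other arrow (which rules out undirected
   cycles), the fibres of S have q or 0 elements according to the last
   coordinate, and the vectors outside the image of S, those with a nonzero
   last coordinate, reach 0 after exactly n = d steps. *)

Section RowEntries.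
Variable k : fieldType.

Definition rget m (a : 'rV[k]_m) (j : nat) : k :=
  if insub j is Some o then a 0 o else 0.

Lemma rget_ord m (a : 'rV[k]_m) (o : 'I_m) : rget a o = a 0 o.
Proof. by rewrite /rget valK. Qed.

Lemma rget_out m (a : 'rV[k]_m) j : (m <= j)%N -> rget a j = 0.
Proof. by move=> le_mj; rewrite /rget insubN // -leqNgt. Qed.

Lemma rget_row m (G : nat -> k) j :
  rget (\row_(i < m) G i) j = if (j < m)%N then G j else 0.
Proof.
case: ltnP => [lt_jm|]; last exact: rget_out.
by rewrite -[j]/(nat_of_ord (Ordinal lt_jm)) rget_ord mxE.
Qed.

Lemma rget0 m j : rget (0 : 'rV[k]_m) j = 0.
Proof. by rewrite /rget; case: insub => [o|]; rewrite ?mxE. Qed.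

Lemma rgetD m (u v : 'rV[k]_m) j : rget (u + v) j = rget u j + rget v j.
Proof. by rewrite /rget; case: insub => [o|]; rewrite ?mxE ?addr0. Qed.

Lemma rgetZ m c (u : 'rV[k]_m) j : rget (c *: u) j = c * rget u j.
Proof. by rewrite /rget; case: insub => [o|]; rewrite ?mxE ?mulr0. Qed.

Lemma rget_rowP m (u v : 'rV[k]_m) :
  (forall j, (j < m)%N -> rget u j = rget v j) -> u = v.
Proof. by move=> eq_uv; apply/rowP => j; rewrite -!rget_ord eq_uv. Qed.

End RowEntries.

Section HomogeneousCoefficients.
Variable k : fieldType.
Implicit Type P : {poly {poly k}}.

Lemma hcoef_sum m (G : 'I_m -> {poly {poly k}}) i j :
  hcoef (\sum_(l < m) G l) i j = \sum_(l < m) hcoef (G l) i j.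
Proof. by rewrite /hcoef !coef_sum. Qed.

Lemma hcoef_monomial (c : k) a b i j :
  hcoef (c%:P%:P * Xv k ^+ a * Yv k ^+ b) i j =
  if (i == a) && (j == b) then c else 0.
Proof.
rewrite /hcoef /Xv /Yv -rmorphXn /= -rmorphM /= coefMXn.
case: (ltnP j b) => [lt_jb|le_bj].
  by rewrite coef0 (_ : (j == b) = false) ?andbF //; apply/negbTE; rewrite ltn_eqF.
rewrite coefC subn_eq0; case: (eqVneq j b) => [->|ne_jb]; last first.
  by rewrite leqNgt ltn_neqAle eq_sym ne_jb le_bj coef0 andbF.
by rewrite leqnn coefCM coefXn andbT; case: eqP; rewrite ?mulr1 ?mulr0.
Qed.

Lemma hcoef_hpoly m (a : 'rV[k]_m) i j :
  hcoef (hpoly a) i j = if (i + j == m.-1)%N then rget a i else 0.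
Proof.
rewrite /hpoly hcoef_sum; under eq_bigr do rewrite hcoef_monomial.
case: (ltnP i m) => [lt_im|le_mi]; last first.
  rewrite rget_out // if_same big1 // => l _.
  by rewrite gtn_eqF // (leq_trans (ltn_ord l) le_mi).
rewrite (bigD1 (Ordinal lt_im)) //= eqxx big1 ?addr0; last first.
  move=> l ne_l; rewrite (_ : (i == l) = false) //.
  by apply: contraNF ne_l => /eqP eq_il; apply/eqP/val_inj.
have -> : (j == m.-1 - i)%N = (i + j == m.-1)%N by apply/eqP/eqP; lia.
by rewrite -[i]/(nat_of_ord (Ordinal lt_im)) rget_ord.
Qed.

Lemma hcoef_Xv_mul P i j :
  hcoef (Xv k * P) i j = if i is i'.+1 then hcoef P i' j else 0.
Proof. by rewrite /hcoef /Xv coefCM coefXM; case: i. Qed.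

Lemma hcoef_Yv_mul P i j :
  hcoef (Yv k * P) i j = if j is j'.+1 then hcoef P i j' else 0.
Proof. by rewrite /hcoef /Yv coefXM; case: j => //=; rewrite coef0. Qed.

Lemma rget_hvec n P i :
  rget (hvec n P) i = if (i <= n)%N then hcoef P i (n - i) else 0.
Proof. exact: (rget_row _ (fun i => hcoef P i (n - i))). Qed.

Lemma rget_hvec_Xv n (a : 'rV[k]_n) i :
  rget (hvec n (Xv k * hpoly a)) i = if i is i'.+1 then rget a i' else 0.
Proof.
rewrite rget_hvec hcoef_Xv_mul; case: i => [|i]; rewrite ?if_same //.
rewrite hcoef_hpoly; case: ltnP => [le_in|lt_ni]; first by rewrite ifT //; lia.
by rewrite rget_out.
Qed.

Lemma rget_hvec_Yv n (a : 'rV[k]_n) i :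
  rget (hvec n (Yv k * hpoly a)) i = rget a i.
Proof.
rewrite rget_hvec hcoef_Yv_mul.
case: leqP => [le_in|lt_ni]; last by rewrite rget_out // ltnW.
case def_j: (n - i)%N => [|j]; first by rewrite rget_out //; lia.
by rewrite hcoef_hpoly ifT //; lia.
Qed.

Lemma hpoly_Ypow_coef m (a : 'rV[k]_m.+1) (c : k) d :
  c != 0 -> hpoly a = c%:P%:P * Yv k ^+ d ->
  [/\ m = d, rget a 0 = c & forall i, i != 0%N -> rget a i = 0].
Proof.
move=> c_nz def_a.
have coef_a i j : (if (i + j == m)%N then rget a i else 0) =
                  if (i == 0%N) && (j == d) then c else 0.
  by rewrite -hcoef_monomial expr0 mulr1 -def_a hcoef_hpoly.
have m_d : m = d.
  move: (coef_a 0%N d); rewrite !eqxx; case: eqP => // _ /esym/eqP.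
  by rewrite (negbTE c_nz).
split=> // [|i i_nz]; first by move: (coef_a 0%N d); rewrite add0n -m_d !eqxx.
have [le_im|lt_mi] := leqP i m; last exact: rget_out.
by move: (coef_a i (m - i)%N); rewrite subnKC // eqxx (negbTE i_nz).
Qed.

End HomogeneousCoefficients.

Lemma irreducible_root0E (R : idomainType) (p : {poly R}) :
  irreducible_elt p -> p`_0 = 0 -> exists2 c, c \is a GRing.unit & p = c%:P * 'X.
Proof.
move=> [_ _ p_irr] p0; have /factor_theorem[q def_p] : root p 0.
  by rewrite /root horner_coef0 p0.
rewrite subr0 in def_p; have [q_unit|] := p_irr _ _ def_p; last first.
  by rewrite poly_unitE size_polyX.
move: q_unit; rewrite poly_unitE => /andP[/eqP size_q q0_unit].
by exists q`_0; rewrite // def_p -size1_polyC ?size_q.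
Qed.

Lemma Ypow_of_pow_irreducible (k : fieldType) m (a : 'rV[k]_m.+1) p d :
  irreducible_elt p -> (0 < d)%N -> hpoly a = p ^+ d -> rget a m = 0 ->
  exists2 c : k, c != 0 & hpoly a = c%:P%:P * Yv k ^+ d.
Proof.
move=> p_irr d_gt0 def_a a_m.
have a0 : (hpoly a)`_0 = 0.
  apply/polyP => i; rewrite coef0 -[_`_i]/(hcoef _ i 0) hcoef_hpoly addn0.
  by case: eqP => // ->.
have /(irreducible_root0E p_irr)[c] : p`_0 = 0.
  move: a0; rewrite def_a -horner_coef0 horner_exp horner_coef0 => /eqP.
  by rewrite expf_eq0 d_gt0 => /eqP.
rewrite poly_unitE unitfE => /andP[/eqP size_c c0_nz] def_p.
have def_c : c = (c`_0)%:P by apply: size1_polyC; rewrite size_c.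
exists (c`_0 ^+ d); first by rewrite expf_eq0 negb_and c0_nz orbT.
by rewrite def_a def_p {1}def_c exprMn !rmorphXn.
Qed.

Section Shift.
Variables (k : fieldType) (n : nat).
Implicit Types (a u : 'rV[k]_n).

Definition shift a : 'rV[k]_n := \row_(j < n) rget a j.+1.

Definition height a : nat := \max_(j : 'I_n | a 0 j != 0) j.+1.

Definition unshift u (c : k) : 'rV[k]_n :=
  \row_(j < n) if (j : nat) is j'.+1 then rget u j' else c.

Lemma rget_shift a j : rget (shift a) j = rget a j.+1.
Proof.
rewrite (rget_row _ (fun j => rget a j.+1)); case: ltnP => // le_nj.
by rewrite rget_out // leqW.
Qed.

Lemma rget_iter_shift i a j : rget (iter i shift a) j = rget a (j + i).
Proof. by elim: i j => [|i IH] j; rewrite ?addn0 //= rget_shift IH addnS. Qed.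

Lemma iter_shift_n a : iter n shift a = 0.
Proof. by apply: rget_rowP => j _; rewrite rget_iter_shift rget0 rget_out ?leq_addl. Qed.

Lemma shift0 : shift 0 = 0.
Proof. by apply: rget_rowP => j _; rewrite rget_shift !rget0. Qed.

Lemma shift_fixed a : shift a = a -> a = 0.
Proof. by move=> fix_a; rewrite -(iter_shift_n a) iter_fix. Qed.

Lemma rget_height a j : rget a j != 0 -> (j < height a)%N.
Proof.
case: (ltnP j n) => [lt_jn|le_nj]; last by rewrite rget_out ?eqxx.
rewrite -[j]/(nat_of_ord (Ordinal lt_jn)) rget_ord => a_j.
exact: (leq_bigmax_cond (F := fun j : 'I_n => j.+1) _ a_j).
Qed.

Lemma height_gt0 a : a != 0 -> (0 < height a)%N.
Proof.
apply: contraNT; rewrite -eqn0Ngt => /eqP h0; apply/eqP/rget_rowP => j _.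
by rewrite rget0; apply/eqP/negPn/negP => /rget_height; rewrite h0.
Qed.

Lemma height_shift a : a != 0 -> (height (shift a) < height a)%N.
Proof.
move=> /height_gt0 h_gt0; rewrite -(prednK h_gt0) ltnS.
by apply/bigmax_leqP => j; rewrite -rget_ord rget_shift => /rget_height; lia.
Qed.

Lemma rget_unshift u c j :
  rget (unshift u c) j = if (j < n)%N then (if j is j'.+1 then rget u j' else c) else 0.
Proof. exact: (rget_row _ (fun j => if j is j'.+1 then rget u j' else c)). Qed.

Lemma rget_shift_last a : rget (shift a) n.-1 = 0.
Proof. by rewrite rget_shift rget_out //; lia. Qed.

Lemma unshiftK u c : rget u n.-1 = 0 -> shift (unshift u c) = u.
Proof.
move=> u_last; apply: rget_rowP => j lt_jn; rewrite rget_shift rget_unshift.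
by case: ltnP => // le_nj; rewrite (_ : j = n.-1) //; lia.
Qed.

Lemma shiftK a : unshift (shift a) (rget a 0) = a.
Proof.
apply: rget_rowP => j lt_jn; rewrite rget_unshift lt_jn.
by case: j lt_jn => [|j] // _; rewrite rget_shift.
Qed.

Lemma unshift_inj u : (0 < n)%N -> injective (unshift u).
Proof. by move=> n_gt0 c c' /(congr1 (fun a => rget a 0)); rewrite !rget_unshift n_gt0. Qed.

End Shift.

Arguments shift {k n} a.

Section ShiftFibres.
Variables (k : finFieldType) (n : nat).
Hypothesis n_gt0 : (0 < n)%N.

Lemma card_shift_preim (u : 'rV[k]_n) :
  #|[set a | shift a == u]| = if rget u n.-1 == 0 then #|k| else 0%N.
Proof.
case: eqP => [u_last|u_last].
  have -> : [set a | shift a == u] = unshift u @: setT.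
    apply/setP => a; rewrite inE; apply/eqP/imsetP => [<-|[c _ ->]].
      by exists (rget a 0); rewrite ?shiftK.
    exact: unshiftK.
  by rewrite card_imset ?cardsT //; apply: unshift_inj.
apply/eqP; rewrite cards_eq0; apply/eqP/setP => a; rewrite !inE.
by apply/negP => /eqP def_u; apply: u_last; rewrite -def_u rget_shift_last.
Qed.

Lemma card_shift_preim0 :
  #|[set a : 'rV[k]_n | (a != 0) && (shift a == 0)]| = (#|k| - 1)%N.
Proof.
have -> : [set a : 'rV[k]_n | (a != 0) && (shift a == 0)] =
          [set a | shift a == 0] :\ 0 by apply/setP => a; rewrite !inE.
have := cardsD1 0 [set a : 'rV[k]_n | shift a == 0].
by rewrite card_shift_preim rget0 eqxx inE shift0 eqxx add1n => ->; rewrite subn1.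
Qed.

End ShiftFibres.

Section Walks.
Variables (V A : eqType) (s t : A -> V).

Lemma joinsC e x y : joins s t e x y = joins s t e y x.
Proof. by rewrite /joins orbC. Qed.

Lemma uwalk_cat u v w es1 es2 :
  uwalk s t u v es1 -> uwalk s t v w es2 -> uwalk s t u w (es1 ++ es2).
Proof.
elim: es1 u => [|e es IH] u /=; first by move=> /eqP ->.
by case/orP => /andP[-> walk] walk2; rewrite (IH _ walk walk2) ?orbT.
Qed.

Lemma uwalk_rev u w es : uwalk s t u w es -> uwalk s t w u (rev es).
Proof.
elim: es u => [|e es IH] u /=; first by rewrite eq_sym.
rewrite rev_cons -cats1 => /orP[] /andP[/eqP <- /IH walk]; apply: uwalk_cat walk _.
  by rewrite /= !eqxx orbT.
by rewrite /= !eqxx.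
Qed.

Lemma dwalk_uwalk u w es : dwalk s t u w es -> uwalk s t u w es.
Proof. by elim: es u => [|e es IH] u //= /andP[-> /IH ->]. Qed.

End Walks.

Lemma nth_rot1 T (x0 : T) (s : seq T) i : (i < size s)%N ->
  nth x0 (rot 1 s) i = nth x0 s (i.+1 %% size s).
Proof.
case: s => [//|x s] /= lt_is; rewrite rot1_cons nth_rcons.
case: ltnP => [lt_is'|le_si]; first by rewrite modn_small.
by rewrite (_ : i = size s) ?eqxx ?modnn //; lia.
Qed.

Lemma modn_succ_surj m j : (j < m)%N -> exists2 i, (i < m)%N & (i.+1 %% m)%N = j.
Proof.
case: j => [|j] lt_jm; last by exists j; rewrite ?modn_small // ltnW.
by exists m.-1; rewrite ?prednK ?modnn //; lia.
Qed.

Section ShiftQuiver.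
Variables (k : finFieldType) (n : nat) (V : eqType) (r t : 'rV[k]_n -> V).
Hypotheses (r_inj : injective r) (tE : forall a, t a = r (shift a)).
Implicit Types (a u : 'rV[k]_n).

Lemma loop_shift a : t a = r a <-> a = 0.
Proof. by rewrite tE; split=> [/r_inj/shift_fixed|->]; rewrite ?shift0. Qed.

Lemma dwalk_to0 a : exists2 es, all (fun e => e != 0) es & dwalk r t (r a) (r 0) es.
Proof.
suff walk_h h : forall a, (height a < h)%N ->
    exists2 es, all (fun e => e != 0) es & dwalk r t (r a) (r 0) es.
  exact: (walk_h (height a).+1).
elim: h => [|h IH] {}a; first by rewrite ltn0.
move=> lt_ah; have [->|a_nz] := eqVneq a 0; first by exists [::]; rewrite /= ?eqxx.
have [es es_nz walk] := IH (shift a) (leq_trans (height_shift a_nz) lt_ah).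
by exists (a :: es); rewrite /= ?a_nz ?es_nz // tE eqxx.
Qed.

Lemma qconnected_shift (VP : pred V) :
  (forall x, VP x -> exists a, x = r a) -> qconnected r t VP (fun a => a != 0).
Proof.
move=> VP_r x y /VP_r[a ->] /VP_r[b ->].
have [es1 es1_nz walk1] := dwalk_to0 a; have [es2 es2_nz walk2] := dwalk_to0 b.
exists (es1 ++ rev es2); rewrite all_cat all_rev es1_nz es2_nz /=.
exact: uwalk_cat (dwalk_uwalk walk1) (uwalk_rev (dwalk_uwalk walk2)).
Qed.

Definition vheight (x : V) : nat := \max_(a | r a == x) height a.

Lemma vheight_r a : vheight (r a) = height a.
Proof. by rewrite /vheight (big_pred1 a) // => b /=; rewrite (inj_eq r_inj). Qed.

Lemma joins_source e x y :
  e != 0 -> joins r t e x y -> (vheight y <= vheight x)%N -> r e = x.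
Proof.
move=> e_nz /orP[/andP[/eqP-> _]|/andP[/eqP def_y /eqP def_x]] // le_yx.
by move: (height_shift e_nz); rewrite -vheight_r -tE def_x -vheight_r def_y ltnNge le_yx.
Qed.

Lemma qacyclic_shift : qacyclic r t (fun a => a != 0).
Proof.
move=> [es [vs [es_nnil size_vs /andP[uniq_es _] es_nz cyc]]].
set m := size es in size_vs; pose v i := nth (r 0) vs i; pose e i := nth 0 es i.
have m_gt0 : (0 < m)%N by rewrite lt0n size_eq0.
have joins_i i : (i < m)%N -> joins r t (e i) (v i) (v (i.+1 %% m)%N).
  move=> lt_im; move/all_nthP: cyc => /(_ (0, (r 0, r 0)) i).
  rewrite !size_zip size_rot size_vs !minnn => /(_ lt_im).
  by rewrite !nth_zip ?size_zip ?size_rot ?size_vs ?minnn // nth_rot1 ?size_vs.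
have e_nz i : (i < m)%N -> e i != 0 by move=> lt_im; apply: (all_nthP _ es_nz).
have [j max_j] := @eq_bigmax _ (fun i : 'I_m => vheight (v i)) (ltac:(by rewrite card_ord)).
have le_j i : (i < m)%N -> (vheight (v i) <= vheight (v j))%N.
  by move=> lt_im; rewrite -max_j (leq_bigmax (Ordinal lt_im)).
have src_j : r (e j) = v j.
  apply: joins_source (e_nz _ (ltn_ord j)) (joins_i _ (ltn_ord j)) (le_j _ _).
  by rewrite ltn_mod.
(* A highest vertex of the cycle is the source of both cycle arrows at it,
   so these arrows coincide and form a loop. *)
have [i lt_im succ_i] := modn_succ_surj (ltn_ord j).
have src_i : r (e i) = v j.
  by apply: joins_source (e_nz _ lt_im) _ (le_j _ lt_im); rewrite joinsC -succ_i joins_i.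
have i_j : i = j.
  apply/eqP; rewrite -(nth_uniq 0 lt_im (ltn_ord j) uniq_es).
  by apply/eqP/r_inj; rewrite src_i src_j.
have : joins r t (e j) (v j) (v j) by rewrite -{3}succ_i i_j joins_i.
rewrite /joins orbb => /andP[_ /eqP tgt_j].
by case/eqP: (e_nz _ (ltn_ord j)); apply/loop_shift; rewrite tgt_j src_j.
Qed.

Lemma dwalk_traject u m : dwalk r t (r u) (r (iter m shift u)) (traject shift u m).
Proof. by elim: m u => [|m IH] u /=; rewrite ?eqxx // tE -iterS iterSr IH. Qed.

Lemma dwalk_trajectE u x es : dwalk r t (r u) x es ->
  es = traject shift u (size es) /\ x = r (iter (size es) shift u).
Proof.
elim: es u => [|e es IH] u /=; first by move/eqP.
move=> /andP[/eqP/r_inj-> /[!tE] /IH[-> ->]].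
by rewrite size_traject -iterS iterSr.
Qed.

Lemma map_t_traject u m :
  map t (traject shift u m) = map r (traject shift (shift u) m).
Proof. by elim: m u => [|m IH] u //=; rewrite tE IH. Qed.

Lemma iter_shift_neq0 u i : rget u n.-1 != 0 -> (i < n)%N -> iter i shift u != 0.
Proof.
move=> u_last lt_in; apply: contra_neq u_last => u_i0.
have le_in1 : (i <= n.-1)%N by lia.
by rewrite -(subnK le_in1) -rget_iter_shift u_i0 rget0.
Qed.

Lemma dpath_to0_unique u : rget u n.-1 != 0 -> exists es,
  [/\ dpath r t (r u) (r 0) es, all (fun e => e != 0) es, size es = n &
      forall es', dpath r t (r u) (r 0) es' -> all (fun e => e != 0) es' -> es' = es].
Proof.
move=> u_last; have traj_nz : 0 \notin traject shift u n.
  by apply/trajectP => -[i lt_in /esym]; apply/eqP/iter_shift_neq0.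
exists (traject shift u n); split.
- apply/andP; split; first by rewrite -(iter_shift_n u) dwalk_traject.
  have -> : r u :: map t (traject shift u n) = map r (traject shift u n.+1).
    by rewrite map_t_traject.
  by rewrite map_inj_uniq // looping_uniq /looping iter_shift_n.
- by apply/allP => a; apply: contraTneq => ->.
- exact: size_traject.
move=> es /andP[/dwalk_trajectE[def_es /r_inj end_es] _] es_nz.
suff size_es : size es = n by rewrite def_es size_es.
case: (ltngtP (size es) n) => // [lt_esn|lt_nes].
  by move: (iter_shift_neq0 u_last lt_esn); rewrite -end_es eqxx.
have : iter n shift u \in es by rewrite def_es; apply/trajectP; exists n.
by rewrite iter_shift_n => /(allP es_nz); rewrite eqxx.
Qed.

Lemma r_neq0 u : r u != r 0 -> u != 0.
Proof. by apply: contra_neq => ->. Qed.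

Lemma card_source_fibre u :
  r u != r 0 -> #|[set a | (a != 0) && (r a == r u)]| = 1%N.
Proof.
move=> u_nz; rewrite (_ : [set a | _] = [set u]) ?cards1 //.
apply/setP => a; rewrite !inE (inj_eq r_inj).
by rewrite andb_idl // => /eqP->; apply: r_neq0.
Qed.

Lemma card_target_fibre u : (0 < n)%N -> r u != r 0 ->
  #|[set a | (a != 0) && (t a == r u)]| = #|k| \/
  #|[set a | (a != 0) && (t a == r u)]| = 0%N.
Proof.
move=> n_gt0 u_nz; have -> : [set a | (a != 0) && (t a == r u)] = [set a | shift a == u].
  apply/setP => a; rewrite !inE tE (inj_eq r_inj) andb_idl //.
  by apply: contraTneq => ->; rewrite shift0 eq_sym; apply: r_neq0.
by rewrite card_shift_preim //; case: ifP; [left|right].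
Qed.

Lemma card_target_fibre0 : (0 < n)%N ->
  #|[set a | (a != 0) && (t a == r 0)]| = (#|k| - 1)%N.
Proof.
move=> n_gt0; rewrite -(card_shift_preim0 k n_gt0); apply: eq_card => a.
by rewrite !inE tE (inj_eq r_inj).
Qed.

Lemma leaf_last_coord u : (0 < n)%N ->
  (forall a, a != 0 -> t a != r u) -> rget u n.-1 != 0.
Proof.
move=> n_gt0 leaf_u; apply/eqP => u_last.
have : unshift u 1 != 0.
  apply/eqP => /(congr1 (fun a => rget a 0)).
  by rewrite rget_unshift n_gt0 rget0 => /eqP; rewrite oner_eq0.
by move=> /leaf_u; rewrite tE unshiftK ?eqxx.
Qed.

End ShiftQuiver.

Section Cosets.
Variables (k : finFieldType) (n : nat) (F : 'rV[k]_(n.+1)).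

Lemma cosetP u w : coset F u = coset F w <-> exists c, u = w + c *: F.
Proof.
split=> [eq_uw|[c ->]].
  have : u \in coset F w by rewrite -eq_uw; apply/imsetP; exists 0; rewrite ?scale0r ?addr0.
  by case/imsetP => c _ ->; exists c.
apply/setP => x; apply/imsetP/imsetP => [[c' _ ->]|[c' _ ->]].
  by exists (c + c') => //; rewrite scalerDl addrA.
by exists (c' - c) => //; rewrite scalerBl [_ - c *: F]addrC addrA addrK.
Qed.

Lemma Rtgt_bijective : rget F n != 0 ->
  (forall a b : 'rV[k]_n, Rtgt F a = Rtgt F b -> a = b) /\
  (forall C, isVertex F C -> exists a : 'rV[k]_n, Rtgt F a = C).
Proof.
move=> F_n; split=> [a b /cosetP[c eq_ab]|_ /existsP[v /eqP->]].
  have eq_j j : rget a j = rget b j + c * rget F j.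
    by rewrite -(rget_hvec_Yv a) -(rget_hvec_Yv b) -rgetZ -rgetD -eq_ab.
  have c0 : c = 0.
    move: (eq_j n); rewrite !(@rget_out _ n) // add0r => /esym/eqP.
    by rewrite mulf_eq0 (negbTE F_n) orbF => /eqP.
  by apply: rget_rowP => j _; rewrite eq_j c0 mul0r addr0.
pose c := - (rget v n / rget F n); pose w := v + c *: F.
exists (\row_(j < n) rget w j); apply/cosetP; exists c.
apply: rget_rowP => j lt_jn; rewrite rget_hvec_Yv rget_row.
case: ltnP => // le_nj; rewrite (_ : j = n); last lia.
by rewrite rgetD rgetZ /c mulNr divfK // subrr.
Qed.

Definition tail_row (v : 'rV[k]_(n.+1)) : 'rV[k]_n := \row_(j < n) rget v j.+1.

Lemma rget_tail_row v j : rget (tail_row v) j = rget v j.+1.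
Proof.
rewrite (rget_row _ (fun j => rget v j.+1)); case: ltnP => // le_nj.
by rewrite rget_out.
Qed.

Lemma tail_row_Xv a : tail_row (hvec n (Xv k * hpoly a)) = a.
Proof. by apply: rget_rowP => j _; rewrite rget_tail_row rget_hvec_Xv. Qed.

Lemma tail_row_Yv a : tail_row (hvec n (Yv k * hpoly a)) = shift a.
Proof. by apply: rget_rowP => j _; rewrite rget_tail_row rget_hvec_Yv rget_shift. Qed.

(* [F_0] and [F_i] say that f is a nonzero multiple of y^n. *)
Section PureYPower.
Hypotheses (F_0 : rget F 0 != 0) (F_i : forall i, i != 0%N -> rget F i = 0).

Lemma coset_eq_tail u w : coset F u = coset F w <-> tail_row u = tail_row w.
Proof.
rewrite cosetP; split=> [[c ->]|eq_uw].
  by apply: rget_rowP => j _; rewrite !rget_tail_row rgetD rgetZ F_i // mulr0 addr0.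
exists ((rget u 0 - rget w 0) / rget F 0); apply: rget_rowP => -[|j] _.
  by rewrite rgetD rgetZ divfK // addrC subrK.
by rewrite rgetD rgetZ (F_i (i := j.+1)) // mulr0 addr0 -!rget_tail_row eq_uw.
Qed.

Lemma Rsrc_inj : injective (Rsrc F).
Proof.
move=> a b eq_ab; rewrite -(tail_row_Xv a) -(tail_row_Xv b).
exact/coset_eq_tail.
Qed.

Lemma Rtgt_shift a : Rtgt F a = Rsrc F (shift a).
Proof. by apply/coset_eq_tail; exact: etrans (tail_row_Yv a) (esym (tail_row_Xv _)). Qed.

Lemma isVertex_Rsrc C : isVertex F C -> exists a, C = Rsrc F a.
Proof.
move=> /existsP[v /eqP->]; exists (tail_row v).
by apply/coset_eq_tail; rewrite tail_row_Xv.
Qed.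

Lemma coset0_Rsrc : coset F 0 = Rsrc F 0.
Proof.
apply/coset_eq_tail; rewrite tail_row_Xv.
by apply: rget_rowP => j _; rewrite rget_tail_row !rget0.
Qed.

End PureYPower.
End Cosets.

Theorem mainTheorem6 (k : finFieldType) (n : nat) (F : 'rV[k]_(n.+1))
    (p : {poly {poly k}}) (m d : nat) :
  homog m p -> irreducible_elt p -> (0 < d)%N -> hpoly F = p ^+ d ->
  ~ ((forall a b : 'rV[k]_n, Rtgt F a = Rtgt F b -> a = b) /\
     (forall C, isVertex F C -> exists a : 'rV[k]_n, Rtgt F a = C)) ->
  exists l : 'rV[k]_n,
    [/\ Rsrc F l = Rtgt F l,
        (forall a, Rsrc F a = Rtgt F a -> a = l),
        Rsrc F l = coset F 0,
        qtree (Rsrc F) (Rtgt F) (isVertex F) (fun a => a != l) &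
        [/\ (* 1 *) (forall a, a != l -> Rsrc F a != coset F 0),
            (* 2 *) (forall v, isVertex F v -> v != coset F 0 ->
                       #|[set a | (a != l) && (Rsrc F a == v)]| = 1%N),
            (* 3 *) (forall v, isVertex F v -> v != coset F 0 ->
                       #|[set a | (a != l) && (Rtgt F a == v)]| = #|k| \/
                       #|[set a | (a != l) && (Rtgt F a == v)]| = 0%N),
            (* 3' *) #|[set a | (a != l) && (Rtgt F a == coset F 0)]| = (#|k| - 1)%N
          & (* 4 *) (forall v, isVertex F v ->
                       (forall a, a != l -> Rtgt F a != v) ->
                       exists es, [/\ dpath (Rsrc F) (Rtgt F) v (coset F 0) es,
                                      all (fun a => a != l) es,
                                      size es = d &
                                      forall es', dpath (Rsrc F) (Rtgt F) v (coset F 0) es' ->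
                                                  all (fun a => a != l) es' -> es' = es])]].
Proof.
move=> _ p_irr d_gt0 def_F not_bij.
have F_n : rget F n = 0 by apply/eqP/negPn/negP => /Rtgt_bijective/not_bij.
have [c c_nz /hpoly_Ypow_coef[//|n_d F_0 F_i]] :=
  Ypow_of_pow_irreducible p_irr d_gt0 def_F F_n.
rewrite -F_0 in c_nz; subst d.
have r_inj := Rsrc_inj c_nz F_i; have tE := Rtgt_shift c_nz F_i.
have vertexE := isVertex_Rsrc c_nz F_i; rewrite (coset0_Rsrc c_nz F_i).
exists 0; split.
- by apply/esym/(loop_shift r_inj tE).
- by move=> a /esym/(loop_shift r_inj tE).
- by [].
- by split; [apply: qconnected_shift | apply: qacyclic_shift].
split.
- by move=> a; apply: contra_neq => /r_inj.
- by move=> _ /vertexE[u ->]; apply: card_source_fibre.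
- by move=> _ /vertexE[u ->]; apply: card_target_fibre.
- exact: card_target_fibre0.
- move=> _ /vertexE[u ->] leaf_u.
  exact: (dpath_to0_unique r_inj tE (leaf_last_coord tE d_gt0 leaf_u)).
Qed.
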